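(* For both CCSK$^{\mathrm P}$ and CCSK, if $t_1,t_2$ are transitions such that $t_1\mathrel\iota t_2$, then $t_1$ and $t_2$ have different keys.
   Context: Names $\mathsf N$ with bijection $\overline\cdot$ onto disjoint co-names; $\mathsf L=\mathsf N\cup\overline{\mathsf N}\cup\{\tau\}$ ($\alpha$ over $\mathsf L$, $\lambda$ over $\mathsf L\setminus\{\tau\}$); keys $\mathsf K$ denumerable. CCSK processes $X::=\mathbf 0\mid\alpha.X\mid X\backslash\lambda\mid X+Y\mid X|Y\mid\alpha[k].X$; $\mathrm{keys}(X)$ keys in $X$. Directions $D\in\{\mathrm L,\mathrm R\}$, $\bar{\mathrm L}=\mathrm R$, $\bar{\mathrm R}=\mathrm L$. Proof keyed labels $\theta::=\upsilon\alpha[k]\mid\upsilon\langle\upsilon_1\lambda[k],\upsilon_2\overline\lambda[k]\rangle$ ($\upsilon,\upsilon_i\in\{|_{\mathrm L},|_{\mathrm R},+_{\mathrm L},+_{\mathrm R}\}^*$), $\ell(\upsilon\alpha[k])=\alpha$, $\ell(\upsilon\langle\cdots\rangle)=\tau$, $\mathrm{key}(\theta)=k$. Forward CCSK$^{\mathrm P}$ transitions: least relation closed under (act) $\alpha.X\xrightarrow{\alpha[k]}\alpha[k].X$ if $\mathrm{keys}(X)=\emptyset$; (pre) $X\xrightarrow\theta X',\mathrm{key}(\theta)\ne k\Rightarrow\alpha[k].X\xrightarrow\theta\alpha[k].X'$; (res) $X\xrightarrow\theta X',\ell(\theta)\notin\{\lambda,\overline\lambda\}\Rightarrow X\backslash\lambda\xrightarrow\theta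 X'\backslash\lambda$; (par) $X\xrightarrow\theta X',\mathrm{key}(\theta)\notin\mathrm{keys}(Y)\Rightarrow X|Y\xrightarrow{|_{\mathrm L}\theta}X'|Y$, $Y|X\xrightarrow{|_{\mathrm R}\theta}Y|X'$; (syn) $X\xrightarrow{\upsilon_1\lambda[k]}X',Y\xrightarrow{\upsilon_2\overline\lambda[k]}Y'\Rightarrow X|Y\xrightarrow{\langle\upsilon_1\lambda[k],\upsilon_2\overline\lambda[k]\rangle}X'|Y'$; (sum) $X\xrightarrow\theta X',\mathrm{keys}(Y)=\emptyset\Rightarrow X+Y\xrightarrow{+_{\mathrm L}\theta}X'+Y$, $Y+X\xrightarrow{+_{\mathrm R}\theta}Y+X'$. Backward transitions are converses of forward ones; the key of a transition is the key of its label. Transitions are connected if there is a path (sequence of composable forward/backward transitions) from the source of one to the target of the other. CCSK: same processes; each CCSK$^{\mathrm P}$ transition with label $\theta$ yields a CCSK transition between the same processes with label $\ell(\theta)[\mathrm{key}(\theta)]$ (a bijection; $\hat t$ denotes the CCSK$^{\mathrm P}$ transition of CCSK transition $t$). Independence $\iota$ on proof labels: least relation closed under ($\theta_{\mathrm L},\theta_{\mathrm R}$ components of a synchronisation label) (C1) $+_D\theta\mathrel\iota+_D\theta'$ if $\theta\mathrel\iota\theta'$; (P1) $|_D\theta\mathrel\iota|_D\theta'$ if $\theta\mathrel\iota\theta'$; (P2$_k$) $|_D\theta\mathrel\iota|_{\bar D}\theta'$ if $\mathrm{key}(\theta)\ne\mathrm{key}(\theta')$; (S1) $|_D\theta\mathrel\iota\langle\theta_{\mathrm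 L},\theta_{\mathrm R}\rangle$ if $\theta\mathrel\iota\theta_D$; (S2) $\langle\theta_{\mathrm L},\theta_{\mathrm R}\rangle\mathrel\iota|_D\theta$ if $\theta_D\mathrel\iota\theta$; (S3) $\langle\theta_1,\theta_2\rangle\mathrel\iota\langle\theta_1',\theta_2'\rangle$ if $\theta_1\mathrel\iota\theta_1'$, $\theta_2\mathrel\iota\theta_2'$. For CCSK$^{\mathrm P}$ transitions $t_1\mathrel\iota t_2$ iff connected and labels $\iota$; for CCSK transitions $t_1\mathrel\iota t_2$ iff connected and labels of $\hat t_1,\hat t_2$ satisfy $\iota$. *)

From Stdlib Require Import List Relations.
Import ListNotations.
Set Implicit Arguments.

Inductive dir := DL | DR.
Definition dflip (D : dir) : dir := match D with DL => DR | DR => DL end.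

(* Keys: the denumerable set K is represented by nat. *)
Definition key_t := nat.

Section CCSK.
Variable N : Type.  (* names *)

(* visible labels  L \ {tau} = N ∪ co-N (co-names are a disjoint copy of N) *)
Inductive vis := VN (a : N) | VC (a : N).
Definition cobar (l : vis) : vis := match l with VN a => VC a | VC a => VN a end.
Inductive act := Vis (l : vis) | Tau.

(* processes X ::= 0 | α.X | X\λ | X+Y | X|Y | α[k].X *)
Inductive proc :=
| PNil
| PPre (a : act) (X : proc)
| PRes (X : proc) (l : vis)
| PSum (X Y : proc)
| PPar (X Y : proc)
| PKey (a : act) (k : key_t) (X : proc).

Fixpoint key_in (k : key_t) (X : proc) : Prop :=
  match X with
  | PNil => False
  | PPre _ X => key_in k X
  | PRes X _ => key_in k X
  | PSum X Y => key_in k X \/ key_in k Y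
  | PPar X Y => key_in k X \/ key_in k Y
  | PKey _ k' X => k = k' \/ key_in k X
  end.

Definition no_keys (X : proc) : Prop := forall k, ~ key_in k X.

Inductive op := OPar (D : dir) | OSum (D : dir).

(* proof keyed labels θ ::= υ α[k] | υ <υ1 λ[k], υ2 λbar[k]> *)
Inductive plab :=
| PSimple (u : list op) (a : act) (k : key_t)
| PSync (u : list op) (u1 : list op) (l : vis) (k : key_t) (u2 : list op).

Definition pre (o : op) (th : plab) : plab :=
  match th with
  | PSimple u a k => PSimple (o :: u) a k
  | PSync u u1 l k u2 => PSync (o :: u) u1 l k u2
  end.

Definition lab (th : plab) : act :=
  match th with PSimple _ a _ => a | PSync _ _ _ _ _ => Tau end.

Definition key (th : plab) : key_t :=
  match th with PSimple _ _ k => k | PSync _ _ _ k _ => k end.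

Inductive step : proc -> plab -> proc -> Prop :=
| s_act a k X : no_keys X -> step (PPre a X) (PSimple [] a k) (PKey a k X)
| s_pre a k X th X' : step X th X' -> key th <> k ->
    step (PKey a k X) th (PKey a k X')
| s_res l X th X' : step X th X' -> lab th <> Vis l -> lab th <> Vis (cobar l) ->
    step (PRes X l) th (PRes X' l)
| s_parL X Y th X' : step X th X' -> ~ key_in (key th) Y ->
    step (PPar X Y) (pre (OPar DL) th) (PPar X' Y)
| s_parR X Y th X' : step X th X' -> ~ key_in (key th) Y ->
    step (PPar Y X) (pre (OPar DR) th) (PPar Y X')
| s_syn X Y X' Y' u1 u2 l k :
    step X (PSimple u1 (Vis l) k) X' -> step Y (PSimple u2 (Vis (cobar l)) k) Y' ->
    step (PPar X Y) (PSync [] u1 l k u2) (PPar X' Y')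
| s_sumL X Y th X' : step X th X' -> no_keys Y ->
    step (PSum X Y) (pre (OSum DL) th) (PSum X' Y)
| s_sumR X Y th X' : step X th X' -> no_keys Y ->
    step (PSum Y X) (pre (OSum DR) th) (PSum Y X').

(* independence on proof keyed labels; θ_L = υ1 λ[k], θ_R = υ2 λbar[k] *)
Inductive iota : plab -> plab -> Prop :=
| i_C1 D th th' : iota th th' -> iota (pre (OSum D) th) (pre (OSum D) th')
| i_P1 D th th' : iota th th' -> iota (pre (OPar D) th) (pre (OPar D) th')
| i_P2 D th th' : key th <> key th' ->
    iota (pre (OPar D) th) (pre (OPar (dflip D)) th')
| i_S1L th u1 l k u2 : iota th (PSimple u1 (Vis l) k) ->
    iota (pre (OPar DL) th) (PSync [] u1 l k u2)
| i_S1R th u1 l k u2 : iota th (PSimple u2 (Vis (cobar l)) k) ->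
    iota (pre (OPar DR) th) (PSync [] u1 l k u2)
| i_S2L th u1 l k u2 : iota (PSimple u1 (Vis l) k) th ->
    iota (PSync [] u1 l k u2) (pre (OPar DL) th)
| i_S2R th u1 l k u2 : iota (PSimple u2 (Vis (cobar l)) k) th ->
    iota (PSync [] u1 l k u2) (pre (OPar DR) th)
| i_S3 u1 l k u2 u1' l' k' u2' :
    iota (PSimple u1 (Vis l) k) (PSimple u1' (Vis l') k') ->
    iota (PSimple u2 (Vis (cobar l)) k) (PSimple u2' (Vis (cobar l')) k') ->
    iota (PSync [] u1 l k u2) (PSync [] u1' l' k' u2').

Definition fb_step (X Y : proc) : Prop :=
  exists th, step X th Y \/ step Y th X.

Definition path (X Y : proc) : Prop := clos_refl_trans proc fb_step X Y.

(* CCSK^P transitions, forward (fwd = true) or backward (fwd = false);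
   src/tgt are the source/target in the direction of the transition *)
Record ptrans := PTrans { psrc : proc; plabel : plab; ptgt : proc; pfwd : bool }.

Definition pvalid (t : ptrans) : Prop :=
  if pfwd t then step (psrc t) (plabel t) (ptgt t)
  else step (ptgt t) (plabel t) (psrc t).

Definition pconnected (t1 t2 : ptrans) : Prop := path (psrc t1) (ptgt t2).

Definition pindep (t1 t2 : ptrans) : Prop :=
  pconnected t1 t2 /\ iota (plabel t1) (plabel t2).

Definition ptkey (t : ptrans) : key_t := key (plabel t).

Record ktrans := KTrans { ksrc : proc; kact : act; kkey : key_t; ktgt : proc; kfwd : bool }.

(* θ is the label of the CCSK^P transition t̂ underlying t *)
Definition khat (t : ktrans) (th : plab) : Prop :=
  lab th = kact t /\ key th = kkey t /\
  (if kfwd t then step (ksrc t) th (ktgt t) else step (ktgt t) th (ksrc t)).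

Definition kvalid (t : ktrans) : Prop := exists th, khat t th.

Definition kconnected (t1 t2 : ktrans) : Prop := path (ksrc t1) (ktgt t2).

Definition kindep (t1 t2 : ktrans) : Prop :=
  kconnected t1 t2 /\ exists th1 th2, khat t1 th1 /\ khat t2 th2 /\ iota th1 th2.

End CCSK.

(** Each rule generating ι either is (P2_k), which demands different keys, or
    relates labels carrying the keys of the ι-related labels in its premise:
    prefixing keeps the key and a synchronisation label has the key of its
    components. *)

Section Keys.
Variable N : Type.

Lemma key_pre (o : op) (th : plab N) : key (pre o th) = key th.
Proof. destruct th; reflexivity. Qed.

Lemma iota_key_neq {th th' : plab N} : iota th th' -> key th <> key th'.
Proof. induction 1; simpl in *; rewrite ?key_pre in *; assumption. Qed.

Lemma pindep_key_neq (t1 t2 : ptrans N) : pindep t1 t2 -> ptkey t1 <> ptkey t2.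
Proof. intros [_ Hiota]. exact (iota_key_neq Hiota). Qed.

Lemma kindep_key_neq (t1 t2 : ktrans N) : kindep t1 t2 -> kkey t1 <> kkey t2.
Proof.
  intros [_ [th1 [th2 [[_ [Hkey1 _]] [[_ [Hkey2 _]] Hiota]]]]].
  rewrite <- Hkey1, <- Hkey2. exact (iota_key_neq Hiota).
Qed.

End Keys.

Theorem lemma6p6 (N : Type) :
  (forall t1 t2 : ptrans N, pvalid t1 -> pvalid t2 -> pindep t1 t2 ->
     ptkey t1 <> ptkey t2) /\
  (forall t1 t2 : ktrans N, kvalid t1 -> kvalid t2 -> kindep t1 t2 ->
     kkey t1 <> kkey t2).
Proof.
  split; intros t1 t2 _ _.
  - apply pindep_key_neq.
  - apply kindep_key_neq.
Qed.
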